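(* Let $n$ and $k$ be positive integers, let $\alpha_1,\ldots,\alpha_n$ be positive real numbers, and let $b_1,\ldots,b_n$ be integers. Let $A_1,\ldots,A_n$ be finite subsets of $\mathbb{Z}$ each of cardinality $k$. For $1\leqslant i<j\leqslant n$ let $m_{ij}$ be an integer greater than $2\max\{|x_i-x_j|:\ x_i\in A_i,\ x_j\in A_j\}$. Then the set $$\Big\{\sum_{i=1}^n a_i:\ a_i\in A_i \text{ for all } i,\ a_i\alpha_i\neq a_j\alpha_j\ \text{and}\ a_i+b_i\not\equiv a_j+b_j \pmod{m_{ij}}\ \text{whenever}\ i<j\Big\}$$ has more than $(k-n)n$ elements. *)

From HB Require Import structures.
From mathcomp Require Import all_boot all_order all_algebra.
From mathcomp Require Import finmap.
From mathcomp Require Import reals.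
Set Implicit Arguments. Unset Strict Implicit. Unset Printing Implicit Defensive.
Import Order.TTheory GRing.Theory Num.Theory.
Local Open Scope ring_scope.
Local Open Scope fset_scope.

Definition restricted_sumset (R : realType) (n : nat) (alpha : 'I_n -> R)
    (b : 'I_n -> int) (A : 'I_n -> {fset int}) (m : 'I_n -> 'I_n -> int)
    (s : int) : Prop :=
  exists a : 'I_n -> int,
    [/\ forall i, a i \in A i,
        forall i j : 'I_n, (i < j)%N ->
          (a i)%:~R * alpha i != (a j)%:~R * alpha j
          /\ (a i + b i != a j + b j %[mod m i j])%Z
      & s = \sum_(i < n) a i].

(* The polynomial method of Alon, Nathanson and Ruzsa.  Let c_ij be the
   residue of b_j - b_i modulo m_ij taken in [-m_ij/2, m_ij/2); as
   |a_i - a_j| < m_ij/2, the congruence a_i + b_i = a_j + b_j (mod m_ij) holds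
   exactly when a_i - a_j = c_ij.  Hence the restrictions say that
     P = prod_(i<j) (alpha_j x_j - alpha_i x_i) (x_j - x_i + c_ij)
   does not vanish at (a_1, ..., a_n).  If all restricted sums lay in a set of
   N = n(k-n) values t, then P * prod_t (x_1 + ... + x_n - t), of degree
   n(k-1), would vanish on A_1 x ... x A_n, so by Lason's coefficient formula
   its coefficient of x_1^(k-1) ... x_n^(k-1) would be 0.  That coefficient
   only depends on the top-degree part V_alpha V_1 (x_1 + ... + x_n)^N, where
   V_c = prod_(i<j) (c_j x_j - c_i x_i), and expanding both Vandermonde
   products it equals N! det[1/(k-1-a-b)!]_(a,b<n) sum_sigma prod_i
   alpha_i^sigma(i).  After scaling rows the matrix becomes
   [(k-1-a)^_b], a Vandermonde matrix times a unitriangular one, and the sum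
   is positive. *)

Set Warnings "-notation-overridden,-ambiguous-paths,-notation-incompatible-prefix".
From HB Require Import structures.
From mathcomp Require Import all_boot all_order all_algebra.
From mathcomp Require Import finmap reals perm mpoly.
From mathcomp Require Import zify ring.
Import Order.TTheory GRing.Theory Num.Theory.
Set Implicit Arguments. Unset Strict Implicit. Unset Printing Implicit Defensive.
Local Open Scope ring_scope.

Lemma lagrange_sum_pow (F : fieldType) (k : nat) (x : 'I_k -> F) :
  injective x -> forall e, (e < k)%N ->
  \sum_(j < k) x j ^+ e / \prod_(l < k | l != j) (x j - x l) = (e == k.-1)%:R.
Proof.
move=> xinj e ek.
pose d j := \prod_(l < k | l != j) (x j - x l).
have dnz j : d j != 0.
  by apply/prodf_neq0 => l lj; rewrite subr_eq0; apply: contra lj => /eqP/xinj ->.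
pose L j := \prod_(l < k | l != j) ('X - (x l)%:P).
have Lx j i : (L j).[x i] = if i == j then d j else 0.
  rewrite horner_prod; case: eqP => [->|/eqP ij].
    by apply: eq_bigr => l _; rewrite hornerXsubC.
  by rewrite (bigD1 i) //= hornerXsubC subrr mul0r.
have sizeL j : size (L j) = k.
  rewrite size_prod => [|l _]; last by rewrite -size_poly_eq0 size_XsubC.
  rewrite (eq_bigr (fun _ => 2%N)) => [|l _]; last by rewrite size_XsubC.
  rewrite sum_nat_const cardC1 card_ord.
  by case: k x xinj ek {d dnz L Lx} j => [|k'] x xinj ek [] //= *; lia.
pose q := \sum_(j < k) (x j ^+ e / d j) *: L j.
have qx i : q.[x i] = x i ^+ e.
  rewrite horner_sum (bigD1 i) //= big1 ?addr0.
    by rewrite hornerZ Lx eqxx mulfVK.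
  by move=> j ji; rewrite hornerZ Lx eq_sym (negbTE ji) mulr0.
have qE : q = 'X^e.
  apply/eqP; rewrite -subr_eq0; apply/negPn/negP => nz.
  have := max_poly_roots nz (rs := [seq x i | i <- enum 'I_k]).
  rewrite size_map size_enum_ord map_inj_uniq ?enum_uniq //.
  have -> : all (root (q - 'X^e)) [seq x i | i <- enum 'I_k].
    by apply/allP => y /mapP [i _ ->]; rewrite /root hornerD hornerN hornerXn qx subrr.
  move=> /(_ isT isT); apply/negP; rewrite -leqNgt.
  apply: (leq_trans (size_polyD _ _)); rewrite size_polyN size_polyXn geq_max ek andbT.
  apply: (leq_trans (size_sum _ _ _)); apply/bigmax_leqP => j _.
  by apply: (leq_trans (size_scale_leq _ _)); rewrite sizeL.
have := congr1 (fun p : {poly F} => p`_k.-1) qE.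
rewrite coefXn eq_sym => <-; rewrite coef_sum; apply: eq_bigr => j _.
rewrite coefZ; have -> : (L j)`_k.-1 = 1.
  by rewrite -(sizeL j) -lead_coefE lead_coef_prod_XsubC.
by rewrite mulr1.
Qed.

Lemma mcoeff_nullstellensatz (F : fieldType) (n k : nat) (x : 'I_n -> 'I_k -> F)
    (p : {mpoly F[n]}) :
  (forall i, injective (x i)) -> (0 < k)%N -> (msize p <= (n * k.-1).+1)%N ->
  p@_[multinom k.-1 | i < n] =
  \sum_(f : {ffun 'I_n -> 'I_k}) meval (fun i => x i (f i)) p /
     \prod_(i < n) \prod_(l < k | l != f i) (x i (f i) - x i l).
Proof.
move=> xinj k_gt0 size_p.
pose w i j := (\prod_(l < k | l != j) (x i j - x i l))^-1.
pose lam i e := \sum_(j < k) x i j ^+ e * w i j.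
have lamE i e : (e < k)%N -> lam i e = (e == k.-1)%:R.
  by move=> ek; rewrite -(lagrange_sum_pow (xinj i) ek).
have prod_lam m : (mdeg m <= n * k.-1)%N ->
    \prod_(i < n) lam i (m i) = (m == [multinom k.-1 | i < n])%:R.
  move=> deg_m; case: (pickP (fun i : 'I_n => m i < k.-1)%N) => [i lti|ge].
    rewrite (bigD1 i) //= lamE; last by apply: (leq_trans lti); rewrite leq_pred.
    rewrite (ltn_eqF lti) mul0r; case: eqP => // mK.
    by move: lti; rewrite mK mnmE ltnn.
  have mK : m = [multinom k.-1 | i < n].
    apply/mnmP => i; rewrite mnmE; apply/eqP; rewrite eqn_leq.
    rewrite [(k.-1 <= _)%N]leqNgt ge andbT leqNgt; apply/negP => gti.
    move: deg_m; apply/negP.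
    have -> : (n * k.-1 = \sum_(j < n) k.-1)%N by rewrite sum_nat_const card_ord.
    rewrite -ltnNge mdegE.
    rewrite (bigD1 i) //= [X in (_ < X)%N](bigD1 i) //= -addSn.
    apply: leq_add => //; apply: leq_sum => j _.
    by rewrite leqNgt ge.
  by rewrite mK eqxx; apply: big1 => i _; rewrite mnmE lamE ?eqxx ?prednK.
transitivity (\sum_(m <- msupp p) p@_m * \prod_(i < n) lam i (m i)).
  rewrite {1}(mpolyE p) raddf_sum /= !big_seq; apply: eq_bigr => m mp.
  rewrite mcoeffZ mcoeffX prod_lam ?(eq_sym m) //.
  by rewrite -ltnS (leq_trans (msize_mdeg_lt mp)).
rewrite (eq_bigr (fun f : {ffun 'I_n -> 'I_k} => \sum_(m <- msupp p)
    p@_m * \prod_(i < n) (x i (f i) ^+ m i * w i (f i)))); last first.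
  move=> f _; rewrite mevalE -prodfV mulr_suml; apply: eq_bigr => m _.
  by rewrite -mulrA big_split.
rewrite exchange_big; apply: eq_bigr => m _.
by rewrite -mulr_sumr bigA_distr_bigA.
Qed.

Lemma msizeXU (R : nzRingType) (n : nat) (i : 'I_n) : msize ('X_i : {mpoly R[n]}) = 2.
Proof. by rewrite msizeX mdeg1. Qed.

Lemma msizeM_leq (R : nzRingType) (n : nat) (p q : {mpoly R[n]}) :
  (msize (p * q) <= (msize p + msize q).-1)%N.
Proof.
have [->|nzp] := eqVneq p 0; first by rewrite mul0r msize0.
have [->|nzq] := eqVneq q 0; first by rewrite mulr0 msize0.
have [->|nzpq] := eqVneq (p * q) 0; first by rewrite msize0.
rewrite -(mlead_deg nzp) -(mlead_deg nzq) -(mlead_deg nzpq) addSn /= addnS ltnS.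
by rewrite -mdegD; apply/lemc_mdeg/mleadM_le.
Qed.

(* [top_eq d p q]: [p] and [q] have degree at most [d] and the same component
   of degree [d]. *)
Definition top_eq (R : nzRingType) (n d : nat) (p q : {mpoly R[n]}) :=
  [&& (msize p <= d.+1)%N, (msize q <= d.+1)%N & (msize (p - q) <= d)%N].

Lemma top_eq_refl (R : nzRingType) (n d : nat) (p : {mpoly R[n]}) :
  (msize p <= d.+1)%N -> top_eq d p p.
Proof. by move=> hp; rewrite /top_eq hp subrr msize0. Qed.

Lemma top_eq1_addC (R : nzRingType) (n : nat) (p : {mpoly R[n]}) (c : R) :
  (msize p <= 2)%N -> top_eq 1 (p + c%:MP) p.
Proof.
move=> hp; rewrite /top_eq hp addrAC subrr add0r msizeC.
rewrite leq_b1 andbT (leq_trans (msizeD_le _ _)) // geq_max hp msizeC.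
by case: (c != 0).
Qed.

Lemma top_eqM (R : nzRingType) (n d1 d2 : nat) (p p' q q' : {mpoly R[n]}) :
  top_eq d1 p p' -> top_eq d2 q q' -> top_eq (d1 + d2) (p * q) (p' * q').
Proof.
move=> /and3P [hp hp' hpp'] /and3P [hq hq' hqq']; apply/and3P; split.
- by apply: leq_trans (msizeM_leq _ _) _; lia.
- by apply: leq_trans (msizeM_leq _ _) _; lia.
have -> : p * q - p' * q' = (p - p') * q + p' * (q - q').
  by rewrite mulrBl mulrBr addrA subrK.
apply: leq_trans (msizeD_le _ _) _; rewrite geq_max.
have := msizeM_leq (p - p') q; have := msizeM_leq p' (q - q').
by move=> h1 h2; apply/andP; split; [apply: leq_trans h2 _ | apply: leq_trans h1 _]; lia.
Qed.

Lemma top_eq_prod (R : nzRingType) (n : nat) (I : Type) (r : seq I) (P : pred I)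
    (d : I -> nat) (F G : I -> {mpoly R[n]}) :
  (forall i, P i -> top_eq (d i) (F i) (G i)) ->
  top_eq (\sum_(i <- r | P i) d i) (\prod_(i <- r | P i) F i)
         (\prod_(i <- r | P i) G i).
Proof.
move=> FG; elim: r => [|i r IH]; first by rewrite !big_nil top_eq_refl ?msize1.
by rewrite !big_cons; case: ifP => // Pi; apply: top_eqM (FG i Pi) IH.
Qed.

Lemma mcoeff_top_eq (R : nzRingType) (n d : nat) (p q : {mpoly R[n]}) m :
  top_eq d p q -> mdeg m = d -> p@_m = q@_m.
Proof.
move=> /and3P [_ _ hpq] deg_m; apply/eqP; rewrite -subr_eq0 -mcoeffB mcoeff_eq0.
by apply: msize_mdeg_ge; rewrite deg_m.
Qed.

Lemma mdeg_mnm_const (n c : nat) : mdeg [multinom c | _ < n] = (n * c)%N.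
Proof.
rewrite mdegE (eq_bigr (fun _ => c)) => [|i _]; last by rewrite mnmE.
by rewrite sum_nat_const card_ord.
Qed.

Lemma restricted_sums_not_covered (F : fieldType) (n k d mm : nat)
    (x : 'I_n -> 'I_k -> F) (P P' : {mpoly F[n]}) (s : seq F) :
  (forall i, injective (x i)) -> (0 < k)%N ->
  (d + mm)%N = (n * k.-1)%N -> top_eq d P P' ->
  (P' * (\sum_(i < n) 'X_i) ^+ mm)@_[multinom k.-1 | _ < n] != 0 ->
  (size s <= mm)%N ->
  exists f : {ffun 'I_n -> 'I_k},
    meval (fun i => x i (f i)) P != 0 /\ \sum_(i < n) x i (f i) \notin s.
Proof.
move=> xinj k_gt0 hd P_top coef_P size_s.
pose v (f : {ffun 'I_n -> 'I_k}) i := x i (f i).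
case: (pickP [pred f | (meval (v f) P != 0) && (\sum_(i < n) v f i \notin s)]).
  by move=> f /andP [Pf sf]; exists f.
move=> covered; case/eqP: coef_P.
pose S : {mpoly F[n]} := \sum_(i < n) 'X_i.
pose Q := P * \prod_(t < mm) (S - (s`_t)%:MP).
have Q_top : top_eq (n * k.-1) Q (P' * S ^+ mm).
  rewrite -hd -[in S ^+ mm](card_ord mm) -prodr_const.
  apply: top_eqM P_top _.
  rewrite -[mm in top_eq mm](card_ord mm) -sum1_card.
  apply: top_eq_prod => t _; rewrite -mpolyCN; apply: top_eq1_addC.
  by apply: leq_trans (msize_sum _ _ _) _; apply/bigmax_leqP => i _; rewrite msizeXU.
have Q_vanish f : meval (v f) Q = 0.
  rewrite rmorphM /=; have [->|Pf] := eqVneq (meval (v f) P) 0; first by rewrite mul0r.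
  have /(nthP 0) [t t_s st] : \sum_(i < n) v f i \in s.
    by have := covered f; rewrite /= Pf /= => /negbFE.
  rewrite rmorph_prod (bigD1 (Ordinal (leq_trans t_s size_s))) //=.
  rewrite rmorphB /= mevalC rmorph_sum /= st.
  by rewrite (eq_bigr (v f)) => [|i _]; rewrite ?mevalXU // subrr mul0r mulr0.
rewrite -(mcoeff_top_eq Q_top) ?mdeg_mnm_const //.
rewrite (mcoeff_nullstellensatz xinj) //; last by case/and3P: Q_top.
by apply: big1 => f _; rewrite Q_vanish mul0r.
Qed.

Lemma mcoeffMXE (R : comNzRingType) (n : nat) (p : {mpoly R[n]}) (u f : 'X_{1..n}) :
  (p * 'X_[u])@_f = if (u <= f)%MM then p@_(f - u)%MM else 0.
Proof.
case: ifP => [le_uf|le_uf].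
  by rewrite -{1}(submK le_uf) addmC mcoeffMX.
rewrite mcoeffM big1 // => -[k1 k2] /= /eqP f_def.
rewrite mcoeffX; case: eqP => [k2E|]; last by rewrite mulr0.
suff : (u <= f)%MM by rewrite le_uf.
apply/mnm_lepP => i; move/(congr1 (fun m : 'X_{1..n} => m i)): f_def.
by rewrite /= mnmDE -k2E => ->; apply: leq_addl.
Qed.

Lemma mcoeff_sumX_exp (R : numFieldType) (n m : nat) (f : 'X_{1..n}) :
  ((\sum_(i < n) 'X_i) ^+ m : {mpoly R[n]})@_f =
  (mdeg f == m)%:R * ((mdeg f)`!%:R / (\prod_(i < n) (f i)`!)%:R).
Proof.
elim: m f => [|m IH] f.
  rewrite expr0 mcoeff1 mdeg_eq0; case: eqP => [->|_]; last by rewrite mul0r.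
  by rewrite mdeg0 mul1r big1 ?divr1 // => i _; rewrite mnm0E.
have fact_prod_neq0 (g : 'X_{1..n}) : (\prod_(i < n) (g i)`!)%:R != 0 :> R.
  by rewrite pnatr_eq0 -lt0n prodn_gt0 // => i; rewrite fact_gt0.
rewrite exprSr mulr_sumr raddf_sum /=.
rewrite (eq_bigr (fun i => (mdeg f == m.+1)%:R *
    ((f i)%:R * (m`!%:R / (\prod_(i < n) (f i)`!)%:R)))) => [|i _]; last first.
  rewrite mcoeffMXE; case: (posnP (f i)) => [fi0|fi_gt0].
    have /negbTE-> : ~~ (U_(i) <= f)%MM.
      by apply/negP => /mnm_lepP/(_ i); rewrite mnm1E eqxx fi0.
    by rewrite fi0 mul0r mulr0.
  have le_Uf : (U_(i) <= f)%MM.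
    by apply/mnm_lepP => j; rewrite mnm1E; case: eqP => [<-|].
  have deg_f : mdeg f = (mdeg (f - U_(i))%MM).+1.
    by rewrite -{1}(submK le_Uf) mdegD mdeg1 addn1.
  rewrite le_Uf IH deg_f eqSS; case: eqP => [->|]; last by rewrite !mul0r.
  have fact_f : (\prod_(j < n) (f j)`!)%:R =
      (f i)%:R * (\prod_(j < n) ((f - U_(i))%MM j)`!)%:R :> R.
    rewrite (bigD1 i) //= [in RHS](bigD1 i) //= mnmBE mnm1E eqxx.
    rewrite -{1}(prednK fi_gt0) factS prednK // subn1 !natrM mulrA; congr (_ * _).
    by congr (_ %:R); apply: eq_bigr => j /negbTE ij; rewrite mnmBE mnm1E eq_sym ij subn0.
  have fi_neq0 : (f i)%:R != 0 :> R by rewrite pnatr_eq0 -lt0n.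
  by rewrite fact_f !mul1r; field; rewrite fi_neq0 fact_prod_neq0.
rewrite -mulr_sumr -mulr_suml -natr_sum -mdegE.
case: eqP => [->|]; last by rewrite !mul0r.
by rewrite !mul1r factS natrM mulrA.
Qed.

Lemma mcoeff_sumX_expMX (R : numFieldType) (n m : nat) (u f : 'X_{1..n}) :
  (mdeg u + m)%N = mdeg f ->
  ((\sum_(i < n) 'X_i) ^+ m * 'X_[u] : {mpoly R[n]})@_f =
  m`!%:R * \prod_(i < n) (if (u i <= f i)%N then ((f i - u i)`!%:R)^-1 else 0).
Proof.
move=> deg_uf; rewrite mcoeffMXE; case: ifP => [le_uf|/negbT le_uf].
  have deg_fu : mdeg (f - u)%MM = m.
    by apply/eqP; rewrite -(eqn_add2l (mdeg u)) deg_uf -mdegD addmC submK.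
  rewrite mcoeff_sumX_exp deg_fu eqxx mul1r natr_prod -prodfV; congr (_ * _).
  by apply: eq_bigr => i _; rewrite (mnm_lepP le_uf i) mnmBE.
have [i /negbTE le_ufi] : exists i, ~~ (u i <= f i)%N.
  by apply/existsP; apply: contraR le_uf => /existsPn le; apply/mnm_lepP => i; apply/negPn.
by rewrite (bigD1 i) //= le_ufi mul0r mulr0.
Qed.

Lemma det_ffact_neq0 (R : numFieldType) (n N : nat) : (n <= N.+1)%N ->
  \det (\matrix_(a < n, b < n) ((N - a) ^_ b)%:R : 'M[R]_n) != 0.
Proof.
move=> le_nN.
pose p (b : nat) : {poly R} := \prod_(l < b) ('X - (l%:R)%:P).
have size_p b : size (p b) = b.+1.
  by rewrite /p size_prod_XsubC -[X in _ = X.+1]card_ord cardT enumT.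
have p_nat (x b : nat) : (p b).[x%:R] = (x ^_ b)%:R.
  rewrite horner_prod ffact_prod natr_prod; have [le_bx|lt_xb] := leqP b x.
    apply: eq_bigr => l _; rewrite hornerXsubC natrB //.
    exact/ltnW/(leq_trans (ltn_ord l)).
  rewrite (bigD1 (Ordinal lt_xb)) //= hornerXsubC subrr mul0r.
  by rewrite (bigD1 (Ordinal lt_xb)) //= subnn mul0r.
pose W := \matrix_(a < n, t < n) (((N - a)%:R : R) ^+ t).
pose U := \matrix_(t < n, b < n) (p b)`_t.
have -> : \matrix_(a < n, b < n) ((N - a) ^_ b)%:R = W *m U.
  apply/matrixP => a b; rewrite !mxE -p_nat (@horner_coef_wide _ n) ?size_p //.
  by apply: eq_bigr => t _; rewrite !mxE mulrC.
have det_U : \det U = 1.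
  rewrite -det_tr det_trig.
    have lead_p b : lead_coef (p b) = 1 by apply: lead_coef_prod_XsubC.
    by apply: big1 => i _; rewrite !mxE -(lead_p i) lead_coefE size_p.
  by apply/is_trig_mxP => i j ij; rewrite !mxE nth_default // size_p.
have -> : W = (Vandermonde n (\row_(a < n) ((N - a)%:R : R)))^T.
  by apply/matrixP => a t; rewrite !mxE.
rewrite det_mulmx det_U mulr1 det_tr det_Vandermonde.
apply/prodf_neq0 => i _; apply/prodf_neq0 => j ij.
rewrite !mxE subr_eq0 eqr_nat; apply/eqP => eq_ij.
by have := ltn_ord i; have := ltn_ord j; lia.
Qed.

Lemma det_inv_fact_neq0 (R : numFieldType) (n N : nat) : (n <= N.+1)%N ->
  \det (\matrix_(a < n, b < n)
     (if (a + b <= N)%N then ((N - (a + b))`!%:R)^-1 else 0) : 'M[R]_n) != 0.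
Proof.
move=> le_nN; set M := \matrix_(a < n, b < n) _.
have: \det (diag_mx (\row_(a < n) ((N - a)`!%:R : R)) *m M) != 0.
  suff -> : diag_mx (\row_(a < n) ((N - a)`!%:R : R)) *m M =
            \matrix_(a < n, b < n) ((N - a) ^_ b)%:R by exact: det_ffact_neq0.
  apply/matrixP => a b; rewrite mul_diag_mx !mxE; case: ifP => le_abN.
    have le_b : (b <= N - a)%N by lia.
    by rewrite -(ffact_fact le_b) natrM subnDA mulfK // pnatr_eq0 -lt0n fact_gt0.
  by rewrite mulr0 ffact_small //; have := ltn_ord a; lia.
by rewrite det_mulmx mulf_eq0 negb_or => /andP [].
Qed.

Lemma bin2_double_addn (n k : nat) : (n <= k)%N ->
  ('C(n, 2) + 'C(n, 2) + n * (k - n) = n * k.-1)%N.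
Proof.
have := mul_bin_diag n 1; rewrite bin1 => bin2E le_nk.
case: n le_nk bin2E => [|n]; first by rewrite bin0n.
by case: k => //= k le_nk bin2E; nia.
Qed.

Definition mvander (R : nzRingType) (n : nat) (c : 'I_n -> R) : {mpoly R[n]} :=
  \prod_(i < n) \prod_(j < n | (i < j)%N) (c j *: 'X_j - c i *: 'X_i).

Definition mnm_perm (n : nat) (s : 'S_n) : 'X_{1..n} := [multinom (s i : nat) | i < n].

Lemma mdeg_mnm_perm (n : nat) (s : 'S_n) : mdeg (mnm_perm s) = 'C(n, 2).
Proof.
rewrite mdegE (eq_bigr (fun i => s i : nat)) => [|i _]; last by rewrite mnmE.
by rewrite -bin2_sum big_mkord [RHS](reindex_inj (@perm_inj _ s)).
Qed.

Lemma mvanderE (R : comNzRingType) (n : nat) (c : 'I_n -> R) :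
  mvander c =
  \sum_(s : 'S_n) ((-1) ^+ s * \prod_(i < n) c i ^+ s i) *: 'X_[mnm_perm s].
Proof.
pose a i : {mpoly R[n]} := c i *: 'X_i.
transitivity (\det (Vandermonde n (\row_(j < n) a j))).
  rewrite det_Vandermonde; apply: eq_bigr => i _; apply: eq_bigr => j _.
  by rewrite !mxE.
rewrite -det_tr; apply: eq_bigr => s _.
rewrite (eq_bigr (fun i => c i ^+ s i *: 'X_i ^+ s i)) => [|i _]; last first.
  by rewrite !mxE exprZn.
rewrite mpolyXE_id; have -> : \prod_(i < n) 'X_i ^+ mnm_perm s i = \prod_(i < n) ('X_i : {mpoly R[n]}) ^+ s i.
  by apply: eq_bigr => i _; rewrite mnmE.
by rewrite scaler_prod -scalerA scaler_sign mulr_sign.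
Qed.

Lemma mcoeff_mvanderM (R : comNzRingType) (n : nat) (c : 'I_n -> R)
    (p : {mpoly R[n]}) (f : 'X_{1..n}) :
  (mvander c * p)@_f =
  \sum_(s : 'S_n) ((-1) ^+ s * \prod_(i < n) c i ^+ s i) * (p * 'X_[mnm_perm s])@_f.
Proof.
rewrite mvanderE mulr_suml raddf_sum /=; apply: eq_bigr => s _.
by rewrite -scalerAl mcoeffZ [_ * p]mulrC.
Qed.

Lemma mcoeff_mvander_sumX_neq0 (R : realFieldType) (n k : nat) (alpha : 'I_n -> R) :
  (forall i, 0 < alpha i) -> (n <= k)%N ->
  (mvander alpha * mvander (fun=> 1) * (\sum_(i < n) 'X_i) ^+ (n * (k - n)))
    @_[multinom k.-1 | _ < n] != 0.
Proof.
move=> alpha_gt0 le_nk.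
set mm := (n * (k - n))%N; set K := [multinom k.-1 | _ < n].
set S := \sum_(i < n) 'X_i.
pose M := \matrix_(a < n, b < n)
  (if (a + b <= k.-1)%N then ((k.-1 - (a + b))`!%:R)^-1 else 0) : 'M[R]_n.
have coef_t (t : 'S_n) :
    (mvander (fun=> 1) * S ^+ mm * 'X_[mnm_perm t])@_K =
    mm`!%:R * ((-1) ^+ t * \det M).
  rewrite -mulrA mcoeff_mvanderM.
  transitivity (mm`!%:R * \det (row_perm t M)).
    rewrite /determinant mulr_sumr; apply: eq_bigr => s _.
    rewrite big1 => [|i _]; last by rewrite expr1n.
    rewrite mulr1 -mulrA -mpolyXD mcoeff_sumX_expMX; last first.
      by rewrite mdegD !mdeg_mnm_perm mdeg_mnm_const bin2_double_addn.
    rewrite mulrCA; congr (_ * (_ * _)); apply: eq_bigr => i _.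
    by rewrite !mxE mnmDE !mnmE.
  by rewrite row_permE det_mulmx det_perm.
rewrite -mulrA mcoeff_mvanderM.
under eq_bigr do rewrite coef_t mulrCA mulrACA -expr2 sqrr_sign mul1r.
rewrite -mulr_sumr -mulr_suml mulf_neq0 ?mulf_neq0 //.
- by rewrite pnatr_eq0 -lt0n fact_gt0.
- rewrite psumr_neq0 => [|t _]; last by apply/prodr_ge0 => i _; rewrite exprn_ge0 ?ltW.
  apply/hasP; exists 1%g; rewrite ?mem_index_enum //=.
  by apply: prodr_gt0 => i _; rewrite exprn_gt0.
- by rewrite /M det_inv_fact_neq0 // (leq_trans le_nk) ?leqSpred.
Qed.

Definition cmodz (e m : int) : int :=
  let r := (e %% m)%Z in if 2 * r < m then r else r - m.

Lemma cmodz_small (d e m : int) :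
  2 * `|d| < m -> (d == e %[mod m])%Z -> d = cmodz e m.
Proof.
move=> small_d /eqP de; rewrite /cmodz -de.
have [d_ge0|d_lt0] := leP 0 d.
  rewrite ger0_norm // in small_d.
  by rewrite modz_small ?ifT //; lia.
rewrite ltr0_norm // in small_d.
have -> : (d %% m)%Z = d + m by rewrite -modzDr modz_small //; lia.
by rewrite ifF ?addrK //; lia.
Qed.

Lemma eqz_mod_cmodz (x y bx By m : int) : 2 * `|x - y| < m ->
  (x + bx == y + By %[mod m])%Z -> x - y = cmodz (By - bx) m.
Proof.
move=> small_xy eq_xy; apply: cmodz_small => //.
by rewrite -(eqz_modDr (y + bx)) addrA subrK addrCA subrK.
Qed.

Lemma sum_ord_pairs (n : nat) :
  (\sum_(i < n) \sum_(j < n | (i < j)%N) 1 = 'C(n, 2))%N.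
Proof.
rewrite (exchange_big_dep xpredT) //= -bin2_sum big_mkord.
apply: eq_bigr => j _.
have := big_ord_widen n (fun=> 1%N) (ltnW (ltn_ord j)) (op := addn) (idx := 0%N).
by rewrite sum_nat_const card_ord muln1 => <-.
Qed.

Definition restriction_mpoly (R : nzRingType) (n : nat) (alpha : 'I_n -> R)
    (c : 'I_n -> 'I_n -> R) : {mpoly R[n]} :=
  \prod_(i < n) \prod_(j < n | (i < j)%N)
     ((alpha j *: 'X_j - alpha i *: 'X_i) * ('X_j - 'X_i + (c i j)%:MP)).

Lemma meval_restriction_mpoly_neq0 (R : idomainType) (n : nat) (alpha : 'I_n -> R)
    (c : 'I_n -> 'I_n -> R) (v : 'I_n -> R) :
  meval v (restriction_mpoly alpha c) != 0 -> forall i j : 'I_n, (i < j)%N ->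
  alpha j * v j != alpha i * v i /\ v j - v i + c i j != 0.
Proof.
move=> Pv i j ij; move: Pv; rewrite rmorph_prod => /prodf_neq0 /(_ i isT).
rewrite rmorph_prod => /prodf_neq0 /(_ j ij).
rewrite rmorphM /= !rmorphB /= rmorphD /= rmorphB /= !mevalZ !mevalXU mevalC.
by rewrite mulf_eq0 negb_or subr_eq0 => /andP.
Qed.

Lemma top_eq_restriction_mpoly (R : comNzRingType) (n : nat) (alpha : 'I_n -> R)
    (c : 'I_n -> 'I_n -> R) :
  top_eq ('C(n, 2) + 'C(n, 2)) (restriction_mpoly alpha c)
         (mvander alpha * mvander (fun=> 1)).
Proof.
have size_lin (a b : R) (i j : 'I_n) : (msize (a *: 'X_j - b *: 'X_i) <= 2)%N.
  apply: leq_trans (msizeD_le _ _) _; rewrite geq_max msizeN.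
  by rewrite !(leq_trans (msizeZ_le _ _)) // msizeXU.
rewrite -sum_ord_pairs -big_split /mvander -big_split /=.
apply: top_eq_prod => i _; rewrite -big_split /= -big_split /=.
apply: top_eq_prod => j _; rewrite !scale1r.
apply: top_eqM; first exact/top_eq_refl/size_lin.
apply: top_eq1_addC; apply: leq_trans (msizeD_le _ _) _.
by rewrite geq_max msizeN !msizeXU.
Qed.

Theorem theorem1p3 (R : realType) (n k : nat) (hn : (0 < n)%N) (hk : (0 < k)%N)
    (alpha : 'I_n -> R) (halpha : forall i, 0 < alpha i)
    (b : 'I_n -> int) (A : 'I_n -> {fset int})
    (hA : forall i, #|` A i| = k)
    (m : 'I_n -> 'I_n -> int)
    (hm : forall i j : 'I_n, (i < j)%N ->
       forall x y, x \in A i -> y \in A j -> 2 * `|x - y| < m i j) :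
  exists s : seq int,
    [/\ uniq s, forall x, x \in s -> restricted_sumset alpha b A m x
      & (k%:Z - n%:Z) * n%:Z < (size s)%:Z].
Proof.
have [lt_kn|le_nk] := ltnP k n; first by exists [::]; split => //=; nia.
pose x i (j : 'I_k) : int := nth 0 (enum_fset (A i)) j.
have xA i j : x i j \in A i by rewrite /x mem_nth // hA.
have xinj i : injective (x i).
  by move=> j1 j2 /eqP; rewrite /x nth_uniq ?hA ?fset_uniq // => /eqP/val_inj.
pose xr i j : R := (x i j)%:~R.
have xrinj i : injective (xr i) by move=> j1 j2 /intr_inj/xinj.
pose c i j : R := (cmodz (b j - b i) (m i j))%:~R.
pose good (f : {ffun 'I_n -> 'I_k}) :=
  meval (fun i => xr i (f i)) (restriction_mpoly alpha c) != 0.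
pose T := undup [seq \sum_(i < n) x i (f i) | f : {ffun 'I_n -> 'I_k} <- enum {ffun 'I_n -> 'I_k} & good f].
exists T; split; first exact: undup_uniq.
  move=> s; rewrite mem_undup => /mapP [f]; rewrite mem_filter => /andP [good_f _] ->.
  exists (fun i => x i (f i)); split => // i j ij.
  have [alpha_ij c_ij] := meval_restriction_mpoly_neq0 good_f ij.
  split; first by rewrite eq_sym ![_%:~R * _]mulrC.
  apply: contra c_ij => /(eqz_mod_cmodz (hm i j ij _ _ (xA i (f i)) (xA j (f j)))).
  by rewrite /c /xr => <-; rewrite intrB addrA subrK subrr.
rewrite subzn // -PoszM ltz_nat mulnC ltnNge; apply/negP => small_T.
have [f [good_f]] := restricted_sums_not_covered (s := map intr T) xrinj hk
  (bin2_double_addn le_nk) (top_eq_restriction_mpoly alpha c)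
  (mcoeff_mvander_sumX_neq0 halpha le_nk) (leq_trans (eq_leq (size_map _ _)) small_T).
by rewrite -rmorph_sum /= map_f // mem_undup map_f // mem_filter mem_enum andbT.
Qed.
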